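(* In the setting below, for every $\varepsilon>0$ and $v>0$ there exists $\kappa>0$ such that for all sufficiently large $t$, $$\mathbb P\Big(\max_{n\in\mathbb N,\ n_t(-v)\le n\le n_t(v)}\frac{F_n-g(\log(n\sqrt{\sigma_t}))}{g'(\log(n\sqrt{\sigma_t}))}\le\kappa\Big)\ge1-\varepsilon,$$ where $n_t(\pm v)=\exp\{\lambda(\sigma_t\pm v\sqrt{\sigma_t})\}$.
   Context: Let $\lambda>0$. Let $\mu$ be a probability distribution on $(0,1)$ such that $m(x)=-\log\mu((x,1))$, $x\in[0,1)$, is twice differentiable on $[0,1)$ with $m'>0$, $m''>0$, $\lim_{x\uparrow1}m''(x)/(m'(x))^2=0$, $\lim_{x\uparrow1}m''(x)m(x)x/(m'(x))^2=\varkappa>0$, and $\lim_{x\uparrow1}m(x)/m'(x)=0$. Let $g=m^{-1}:[0,\infty)\to[0,1)$; for large $t$ let $x_t\in[0,t)$ be the unique solution of $(\log g)'(\lambda x)=\frac1{\lambda(t-x)}$ and $\sigma_t=\max\{1,x_t\}$. Let $(F_n)_{n\ge1}$ be i.i.d. with law $\mu$. *)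

From HB Require Import structures.
From mathcomp Require Import all_boot all_order all_algebra.
From mathcomp Require Import all_classical all_reals all_analysis.
Set Implicit Arguments. Unset Strict Implicit. Unset Printing Implicit Defensive.
Import Order.TTheory GRing.Theory Num.Theory.
Import numFieldNormedType.Exports.
Local Open Scope classical_set_scope.
Local Open Scope ring_scope.

Definition mfun_of {R : realType} (mu : probability R R) (x : R) : R :=
  - ln (fine (mu [set y : R | x < y < 1])).

Definition sigma_of {R : realType} (xt : R -> R) (t : R) : R := Num.max 1 (xt t).

Definition n_of {R : realType} (lambda : R) (xt : R -> R) (t v : R) : R :=
  expR (lambda * (sigma_of xt t + v * Num.sqrt (sigma_of xt t))).

Definition iid_with_law {d} {T : measurableType d} {R : realType}
  (P : probability T R) (F : nat -> T -> R) (mu : probability R R) : Prop :=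
  (forall n, measurable_fun setT (F n)) /\
  (forall n (B : set R), measurable B -> P (F n @^-1` B) = mu B) /\
  (forall (s : seq nat) (B : nat -> set R), uniq s ->
     (forall i, measurable (B i)) ->
     P (\bigcap_(i in [set` s]) (F i @^-1` B i)) =
       (\prod_(i <- s) P (F i @^-1` B i))%E).

(* A union bound suffices.
   Write y_n = log (n sqrt sigma_t).  Since g = m^-1, g'(y) = 1 / m'(g y), so the
   event (F_n - g y_n) / g'(y_n) > kappa is {F_n > g y_n + kappa / m'(g y_n)}, and
   convexity of m (tangent at g y_n) bounds its probability exp(-m(.)) by
   exp(-y_n - kappa) = e^-kappa / (n sqrt sigma_t).  Summing over the window
   n_t(-v) <= n <= n_t(v), whose logarithmic length is 2 lambda v sqrt sigma_t,
   the harmonic sum contributes at most 2 (1 + 2 lambda v sqrt sigma_t), so the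
   total is at most e^-kappa (2 + 4 lambda v), which is below eps for kappa large. *)

From HB Require Import structures.
From mathcomp Require Import all_boot all_order all_algebra.
From mathcomp Require Import all_classical all_reals all_analysis.
From mathcomp Require Import ring lra.
Import Order.TTheory GRing.Theory Num.Theory.
Import numFieldNormedType.Exports.
Local Open Scope classical_set_scope.
Local Open Scope ring_scope.
Set Implicit Arguments. Unset Strict Implicit. Unset Printing Implicit Defensive.

Lemma MVT_segment (R : realType) (f df : R -> R) (a b : R) : a < b ->
  (forall x, a <= x <= b -> is_derive x 1 f (df x)) ->
  exists2 c, a < c < b & f b - f a = df c * (b - a).
Proof.
move=> ab fdf.
have fdf_itv x : x \in `[a, b] -> is_derive x 1 f (df x) by rewrite in_itv; exact: fdf.
have f_cont : {within `[a, b], continuous f}.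
  apply: derivable_within_continuous => x /fdf_itv fx.
  exact: (@ex_derive _ _ _ _ _ _ (df x)).
have [c] := MVT ab (fun x xab => fdf_itv x (subset_itv_oo_cc xab)) f_cont.
by rewrite in_itv /= => cab ->; exists c.
Qed.

Lemma convex_tangent_le (R : realType) (f df d2f : R -> R) (a b : R) : a <= b ->
  (forall x, a <= x <= b -> is_derive x 1 f (df x)) ->
  (forall x, a <= x <= b -> is_derive x 1 df (d2f x)) ->
  (forall x, a <= x <= b -> 0 <= d2f x) ->
  f a + df a * (b - a) <= f b.
Proof.
rewrite le_eqVlt => /orP[/eqP <- _ _ _|ab fdf dfd2f d2f_ge0]; first lra.
have [c /andP[ac cb] fab] := MVT_segment ab fdf.
have [w /andP[aw wc] dfc] : exists2 w, a < w < c & df c - df a = d2f w * (c - a).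
  by apply: MVT_segment => // x /andP[ax xc]; apply: dfd2f; lra.
have : 0 <= d2f w * (c - a) by rewrite mulr_ge0 ?d2f_ge0; lra.
rewrite -dfc subr_ge0 => dfac.
have : df a * (b - a) <= df c * (b - a) by rewrite ler_wpM2r // subr_ge0 ltW.
lra.
Qed.

Lemma half_le_ln1Dx (R : realType) (x : R) : 0 <= x <= 1 -> x / 2 <= ln (1 + x).
Proof.
move=> /andP[x0 x1].
rewrite -ler_expR lnK ?posrE; last lra.
have := expR_ge1Dx (- (x / 2)).
have : expR (x / 2) * expR (- (x / 2)) = 1 by rewrite -expRD subrr expR0.
have := expR_gt0 (x / 2).
nra.
Qed.

Lemma sum_harmonic_le (R : realType) (a : R) (K : nat) : 0 < a ->
  \sum_(n < K | a <= n%:R) (n%:R : R)^-1 <= 2 * Num.max 0 (ln K%:R - ln a).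
Proof.
move=> a0; elim: K => [|K IH]; first by rewrite big_ord0 mulr_ge0 ?le_max ?lexx.
rewrite big_mkcond big_ord_recr -big_mkcond /=.
have lnS : ln (K%:R : R) <= ln K.+1%:R.
  case: K {IH} => [|K]; first by rewrite ln0 // ln1.
  by rewrite ler_ln ?posrE ?ltr0n // ler_nat.
case: ifP => [aK|_]; last first.
  rewrite addr0 (le_trans IH) // ler_pM2l // ge_max le_max lexx /=.
  by rewrite le_max lerD2r lnS orbT.
have K0 : (0 : R) < K%:R by apply: lt_le_trans aK.
have lnK1 : ln (K%:R : R) + (K%:R)^-1 / 2 <= ln K.+1%:R.
  have -> : (K.+1%:R : R) = K%:R * (1 + K%:R^-1).
    by rewrite mulrDr mulr1 mulfV ?gt_eqF // -natr1.
  rewrite lnM ?posrE ?addr_gt0 ?invr_gt0 // lerD2l half_le_ln1Dx //.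
  by rewrite invr_ge0 ltW //= invf_le1 // ler1n -(ltr0n R).
have aKln : ln a <= ln (K%:R : R) by rewrite ler_ln.
move: IH; rewrite !max_r ?subr_ge0 //; last exact: le_trans lnS.
lra.
Qed.

Lemma sum_harmonic_window_le (R : realType) (a b : R) : 0 < a <= b -> 1 <= b ->
  \sum_(n < (Num.truncn b).+1 | a <= n%:R) (n%:R : R)^-1 <= 2 * (ln b - ln a + 1).
Proof.
move=> /andP[a0 ab] b1; apply: (le_trans (sum_harmonic_le _ a0)).
have b0 : 0 < b by lra.
have lnK : ln (Num.truncn b).+1%:R <= ln (b + 1).
  rewrite ler_ln ?posrE ?ltr0n ?addr_gt0 // -natr1 lerD2r.
  by have /andP[] := truncn_itv (ltW b0).
have lnb1 : ln (b + 1) <= ln b + 1.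
  have -> : b + 1 = b * (1 + b^-1) by rewrite mulrDr mulr1 mulfV ?gt_eqF.
  rewrite lnM ?posrE ?addr_gt0 ?invr_gt0 // lerD2l.
  have binv0 : 0 < b^-1 by rewrite invr_gt0.
  by rewrite (le_trans (le_ln1Dx _)) ?invf_le1 //; lra.
have lnab : ln a <= ln b by rewrite ler_ln.
rewrite ler_pM2l // ge_max; apply/andP; split; lra.
Qed.

Lemma exists_expRN_mul_le (R : realType) (c C eps : R) : 0 < C -> 0 < eps ->
  exists kappa, [/\ 0 < kappa, c < kappa & expR (- kappa) * C <= eps].
Proof.
move=> C0 eps0; have Ceps0 : 0 < C / eps by rewrite divr_gt0.
have := normr_ge0 (ln (C / eps)); have := ler_norm c; have := normr_ge0 c.
exists (`|c| + `|ln (C / eps)| + 1); split; try lra.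
have : expR (- (`|c| + `|ln (C / eps)| + 1)) <= expR (- ln (C / eps)).
  by rewrite ler_expR lerN2; have := ler_norm (ln (C / eps)); lra.
rewrite -lnV ?posrE // lnK ?posrE ?invr_gt0 // invf_div => /(ler_wpM2r (ltW C0)).
by rewrite divfK ?gt_eqF.
Qed.

Lemma union_bound_forall d (T : measurableType d) (R : realType)
  (P : probability T R) (K : nat) (Q : pred nat) (A : nat -> set T) (e : R) :
  (forall n, measurable (A n)) ->
  (\sum_(n < K | Q n) P (A n) <= e%:E)%E ->
  ((1 - e)%:E <= P [set w | forall n, (n < K)%N -> Q n -> ~ A n w])%E.
Proof.
move=> mA sumA.
pose B n := if Q n then A n else set0.
have mB n : measurable (B n) by rewrite /B; case: ifP.
set U := \big[setU/set0]_(n < K) B n.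
have -> : [set w | forall n, (n < K)%N -> Q n -> ~ A n w] = ~` U.
  rewrite /U -bigcup_mkord; apply/seteqP; split => w /=.
  - by move=> hw [n /= nK]; rewrite /B; case: ifP => // /(hw n nK).
  - by move=> hw n nK Qn An; apply: hw; exists n => //; rewrite /B Qn.
have PU : (P U <= e%:E)%E.
  apply: le_trans (@Boole_inequality _ _ _ P B K (fun n _ => mB n)) _.
  rewrite big_mkcond /= in sumA; apply: le_trans sumA; apply: lee_sum => n _.
  by rewrite /B; case: ifP => // _; rewrite measure0.
have fU : P U \is a fin_num by rewrite ge0_fin_numE // (le_lt_trans PU) ?ltry.
rewrite probability_setC; last exact: bigsetU_measurable.
by move: PU; rewrite -(fineK fU) -EFinB !lee_fin; lra.
Qed.

Lemma union_bound_window d (T : measurableType d) (R : realType)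
  (P : probability T R) (Y : nat -> T -> R) (a b kappa e : R) : 0 <= b ->
  (forall n, measurable [set w | kappa < Y n w]) ->
  (\sum_(n < (Num.truncn b).+1 | (a <= n%:R)%R) P [set w | (kappa < Y n w)%R] <= e%:E)%E ->
  ((1 - e)%:E <= P [set w | forall n : nat, (a <= n%:R <= b -> Y n w <= kappa)%R])%E.
Proof.
move=> b0 mY sumY.
have window n : (n < (Num.truncn b).+1)%N = (n%:R <= b) by rewrite ltnS truncn_ge_nat.
have -> : [set w | forall n : nat, a <= n%:R <= b -> Y n w <= kappa] =
    [set w | forall n, (n < (Num.truncn b).+1)%N -> a <= n%:R -> ~ kappa < Y n w].
  apply/seteqP; split => w /= Yw n.
  - by rewrite window => nb an; apply/negP; rewrite -leNgt; apply: Yw; rewrite an.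
  - by move=> /andP[an nb]; rewrite leNgt; apply/negP; apply: Yw; rewrite ?window.
exact: union_bound_forall.
Qed.

Lemma measurable_set_oo (R : realType) (x y : R) : measurable [set z : R | x < z < y].
Proof. by rewrite -set_itvoo; exact: measurable_itv. Qed.

Definition exceedance (R : realType) (g : R -> R) (y kappa : R) : set R :=
  [set z | kappa < (z - g y) / derive1 g y].

Lemma measurable_exceedance (R : realType) (g : R -> R) (y kappa : R) :
  measurable (exceedance g y kappa).
Proof.
have cont : continuous (fun z : R => (z - g y) / derive1 g y).
  by move=> z; apply: cvgM; [apply: cvgB; [exact: cvg_id|exact: cvg_cst]|exact: cvg_cst].
have := measurable_realfun.continuous_measurable_fun cont measurableT
  (measurable_itv `]kappa, +oo[).
by rewrite setTI; congr measurable; apply/seteqP; split => z; rewrite /= in_itv /= andbT.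
Qed.

Section survival_function.
Variables (R : realType) (mu : probability R R).
Local Notation m := (mfun_of mu).
Hypothesis mu01 : mu [set y : R | 0 < y < 1] = 1%E.
Hypothesis mu_tail_gt0 : forall x : R, 0 <= x < 1 -> (0 < mu [set y : R | (x < y < 1)%R])%E.

Lemma mfun_of0 : m 0 = 0.
Proof. by rewrite /mfun_of mu01 /= ln1 oppr0. Qed.

Lemma mu_tail_expR (x : R) : 0 <= x < 1 -> mu [set y : R | x < y < 1] = (expR (- m x))%:E.
Proof.
move=> /mu_tail_gt0 mu_gt0.
have mu_le1 := probability_le1 mu (measurable_set_oo x 1).
have mu_fin : mu [set y : R | x < y < 1] \is a fin_num.
  by rewrite ge0_fin_numE ?(le_lt_trans mu_le1) ?ltry // ltW.
by rewrite /mfun_of opprK lnK ?fineK // posrE -lte_fin fineK.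
Qed.

Lemma mfun_of_le (x y : R) : 0 <= x -> x <= y -> y < 1 -> m x <= m y.
Proof.
move=> x0 xy y1.
have : (mu [set z : R | (y < z < 1)%R] <= mu [set z : R | (x < z < 1)%R])%E.
  apply: le_measure; rewrite ?inE; try exact: measurable_set_oo.
  by move=> z /= /andP[yz ->]; rewrite (le_lt_trans xy).
by rewrite !mu_tail_expR ?x0 ?(le_lt_trans xy) ?(le_trans x0) // lee_fin ler_expR; lra.
Qed.

Lemma measure_setI01 (B : set R) : measurable B ->
  mu B = mu (B `&` [set y : R | 0 < y < 1]).
Proof.
move=> mB; have m01 := measurable_set_oo (0 : R) 1.
rewrite (measureDI mu mB m01) [X in (X + _)%E](_ : _ = 0%E) ?add0e //.
apply/eqP; rewrite eq_le measure_ge0 andbT.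
apply: (@le_trans _ _ (mu (~` [set y : R | 0 < y < 1]))).
  by apply: le_measure; rewrite ?inE; [exact: measurableD|exact: measurableC|move=> z []].
by rewrite probability_setC // mu01 subee.
Qed.

Variables (m1 m2 g : R -> R).
Hypothesis m_derive : forall x : R, 0 < x < 1 -> is_derive x 1 m (m1 x).
Hypothesis m1_derive : forall x : R, 0 < x < 1 -> is_derive x 1 m1 (m2 x).
Hypothesis m1_gt0 : forall x : R, 0 <= x < 1 -> 0 < m1 x.
Hypothesis m2_gt0 : forall x : R, 0 <= x < 1 -> 0 < m2 x.
Hypothesis gK : forall y : R, 0 <= y -> 0 <= g y < 1 /\ m (g y) = y.

Lemma mfun_of_lt (x y : R) : 0 <= x -> x < y -> y < 1 -> m x < m y.
Proof.
move=> x0 xy y1; pose z := (x + y) / 2.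
apply: (@le_lt_trans _ _ (m z)); first by apply: mfun_of_le; rewrite /z; lra.
have [c /andP[zc cy] mzy] : exists2 c, z < c < y & m y - m z = m1 c * (y - z).
  apply: MVT_segment => [|w /andP[zw wy]]; first by rewrite /z; lra.
  by apply: m_derive; rewrite /z in zw; apply/andP; split; lra.
have : 0 < m1 c by apply: m1_gt0; rewrite /z in zc *; apply/andP; split; lra.
move=> m1c; rewrite -subr_gt0 mzy.
by rewrite mulr_gt0 // subr_gt0 (lt_trans zc cy).
Qed.

Lemma mfun_of_inj (x y : R) : 0 <= x < 1 -> 0 <= y < 1 -> m x = m y -> x = y.
Proof.
move=> /andP[x0 x1] /andP[y0 y1] mxy.
case: (ltgtP x y) => // [xy|yx].
- by have := mfun_of_lt x0 xy y1; rewrite mxy ltxx.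
- by have := mfun_of_lt y0 yx x1; rewrite mxy ltxx.
Qed.

Lemma g_gt0 (y : R) : 0 < y -> 0 < g y.
Proof.
move=> y0; have [/andP[gy0 _] mgy] := gK (ltW y0).
rewrite lt_neqAle gy0 andbT; apply: contraTneq y0 => gy_eq0.
by rewrite -mgy -gy_eq0 mfun_of0 ltxx.
Qed.

Lemma derive1_g (y : R) : 0 < y -> derive1 g y = (m1 (g y))^-1.
Proof.
move=> y0; have [/andP[_ gy1] mgy] := gK (ltW y0).
have gy01 : 0 < g y < 1 by rewrite g_gt0.
have near01 : \forall z \near g y, 0 < z < 1.
  by apply: filterS (near_in_itvoo (_ : g y \in `]0, 1[)) => [z|]; rewrite in_itv.
have mK : {near g y, cancel m g}.
  apply: filterS near01 => z /andP[z0 z1].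
  have mz0 : 0 <= m z by rewrite -mfun_of0; apply: mfun_of_le => //; exact: ltW.
  have [/andP[gmz0 gmz1] mgmz] := gK mz0.
  by apply: mfun_of_inj; rewrite ?gmz0 ?gmz1 ?(ltW z0).
have m_cont : {near g y, continuous m}.
  apply: filterS near01 => z z01; apply/differentiable_continuous/derivable1_diffP.
  exact: (@ex_derive _ _ _ _ _ _ (m1 z)) (m_derive z01).
have m1_neq0 : m1 (g y) != 0 by rewrite gt_eqF // m1_gt0 // (ltW (g_gt0 y0)) gy1.
have := is_derive_inverse mK m_cont (m_derive gy01) m1_neq0.
by rewrite mgy derive1E => g_derive; apply: derive_val.
Qed.

Lemma m_tangent_le (x z : R) : 0 < x -> x <= z -> z < 1 -> m x + m1 x * (z - x) <= m z.
Proof.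
move=> x0 xz z1.
have w01 w : x <= w <= z -> 0 < w < 1 by move=> /andP[xw wz]; apply/andP; split; lra.
apply: (@convex_tangent_le R m m1 m2 x z xz) => w /w01 w01'.
- exact: m_derive.
- exact: m1_derive.
- by case/andP: w01' => w0 w1; apply/ltW/m2_gt0; rewrite (ltW w0) w1.
Qed.

Lemma mu_exceedance_le (y kappa : R) : 0 < y -> 0 < kappa ->
  (mu (exceedance g y kappa) <= (expR (- kappa - y))%:E)%E.
Proof.
move=> y0 k0; have [/andP[_ gy1] mgy] := gK (ltW y0); have gy0 := g_gt0 y0.
have m1gy : 0 < m1 (g y) by apply: m1_gt0; rewrite ltW.
pose x := g y + kappa / m1 (g y).
have gyx : g y < x by rewrite /x ltrDl divr_gt0.
have sub : exceedance g y kappa `&` [set z : R | 0 < z < 1] `<=` [set z : R | x < z < 1].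
  move=> z [] /=; rewrite /exceedance /= derive1_g // invrK -ltr_pdivrMr //.
  move=> kz /andP[_ ->].
  by rewrite andbT /x -ltrBrDl.
rewrite measure_setI01; last exact: measurable_exceedance.
have [x1|x1] := ltP x 1; last first.
  rewrite (_ : _ `&` _ = set0) ?measure0 ?lee_fin ?expR_ge0 //.
  by apply/seteqP; split => // z /sub /= /andP[]; lra.
have tail_x : (mu [set z : R | (x < z < 1)%R] <= (expR (- kappa - y))%:E)%E.
  rewrite mu_tail_expR ?x1 ?andbT; last by rewrite ltW // (lt_trans gy0).
  rewrite lee_fin ler_expR.
  have := m_tangent_le gy0 (ltW gyx) x1.
  rewrite mgy /x addrAC subrr add0r mulrC divfK ?gt_eqF //; lra.
apply: le_trans (le_measure _ _ _ sub) tail_x; rewrite inE.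
- exact: measurableI (measurable_exceedance _ _ _) (measurable_set_oo _ _).
- exact: measurable_set_oo.
Qed.

(* Nothing is known about [derive1 g 0] ([0] is the boundary of the domain of
   [g]), but on [(0,1)] the normalised variable is bounded by its inverse, also
   when it is [0] since then [0^-1 = 0]. *)
Lemma mu_exceedance0 (kappa : R) :
  `|derive1 g 0|^-1 < kappa -> mu (exceedance g 0 kappa) = 0%E.
Proof.
move=> kd; rewrite measure_setI01; last exact: measurable_exceedance.
rewrite (_ : _ `&` _ = set0) ?measure0 //; apply/seteqP; split => // z [].
rewrite /exceedance /= => kz /andP[z0 z1].
have [/andP[g00 g01] _] := gK (lexx 0).
have : (z - g 0) / derive1 g 0 <= `|derive1 g 0|^-1.
  rewrite (le_trans (ler_norm _)) // normrM normfV ler_piMl // ler_norml.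
  by apply/andP; split; lra.
lra.
Qed.

Lemma mu_exceedance_ln_le (n : nat) (s kappa : R) : (0 < n)%N -> 1 <= s -> 0 < kappa ->
  `|derive1 g 0|^-1 < kappa ->
  (mu (exceedance g (ln (n%:R * s)) kappa) <= (expR (- kappa) / (n%:R * s))%:E)%E.
Proof.
move=> n0 s1 k0 kd.
have ns1 : 1 <= n%:R * s by rewrite mulr_ege1 // ler1n.
have ns0 : 0 < n%:R * s by lra.
have [ln0|ln_gt0] := eqVneq (ln (n%:R * s)) 0.
  by rewrite ln0 mu_exceedance0 // lee_fin divr_ge0 ?expR_ge0 ?ltW.
apply: le_trans (mu_exceedance_le _ k0) _.
  by rewrite lt_neqAle eq_sym ln_gt0 ln_ge0.
by rewrite lee_fin expRD [expR (- ln _)]expRN lnK.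
Qed.

Lemma sum_mu_exceedance_le (s kappa a b : R) :
  1 <= s -> 0 < a <= b -> 1 <= b -> 0 < kappa -> `|derive1 g 0|^-1 < kappa ->
  (\sum_(n < (Num.truncn b).+1 | (a <= n%:R)%R) mu (exceedance g (ln (n%:R * s)) kappa)
    <= (expR (- kappa) / s * (2 * (ln b - ln a + 1)))%:E)%E.
Proof.
move=> s1 ab b1 k0 kd; have /andP[a0 _] := ab.
apply: (@le_trans _ _
  (\sum_(n < (Num.truncn b).+1 | (a <= n%:R)%R) (expR (- kappa) / s * n%:R^-1)%:E)).
  apply: lee_sum => n an; rewrite -mulrA -invfM [s * _]mulrC.
  by apply: mu_exceedance_ln_le => //; rewrite -(ltr0n R) (lt_le_trans a0).
rewrite sumEFin lee_fin -mulr_sumr; apply: ler_wpM2l; last exact: sum_harmonic_window_le.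
by rewrite divr_ge0 ?expR_ge0 //; lra.
Qed.
End survival_function.

Lemma sqrt_sigma_of_ge1 (R : realType) (xt : R -> R) (t : R) :
  1 <= Num.sqrt (sigma_of xt t).
Proof. by rewrite -sqrtr1 ler_wsqrtr // le_max lexx. Qed.

Lemma n_of_window (R : realType) (lambda v : R) (xt : R -> R) (t : R) :
  0 < lambda -> 0 < v ->
  [/\ 0 < n_of lambda xt t (- v) <= n_of lambda xt t v, 1 <= n_of lambda xt t v &
      ln (n_of lambda xt t v) - ln (n_of lambda xt t (- v)) =
        2 * lambda * v * Num.sqrt (sigma_of xt t)].
Proof.
move=> lambda0 v0; have s1 := sqrt_sigma_of_ge1 xt t.
have sigma1 : 1 <= sigma_of xt t by rewrite le_max lexx.
rewrite /n_of; set s := Num.sqrt _ in s1 *.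
have vs0 : 0 < v * s by rewrite mulr_gt0 //; lra.
split.
- by rewrite expR_gt0 ler_expR ler_pM2l // lerD2l mulNr /=; lra.
- by rewrite -expR0 ler_expR mulr_ge0 //; lra.
- by rewrite !expRK; ring.
Qed.

Theorem lemma16 (R : realType) (lambda : R) (mu : probability R R)
  (m1 m2 : R -> R) (varkappa : R) (g : R -> R) (xt : R -> R)
  (d : measure_display) (T : measurableType d) (P : probability T R)
  (F : nat -> T -> R) :
  0 < lambda ->
  (* mu is a probability distribution on (0,1) *)
  mu [set y : R | 0 < y < 1] = 1%E ->
  (* m is real-valued on [0,1) *)
  (forall x : R, 0 <= x < 1 -> (0 < mu [set y : R | (x < y < 1)%R])%E) ->
  (* m twice differentiable on [0,1) (one-sided at 0), m' = m1, m'' = m2 *)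
  (forall x : R, 0 < x < 1 -> is_derive x 1 (mfun_of mu) (m1 x)) ->
  (forall x : R, 0 < x < 1 -> is_derive x 1 m1 (m2 x)) ->
  (fun h : R => h^-1 * (mfun_of mu h - mfun_of mu 0)) @ 0^'+ --> m1 0 ->
  (fun h : R => h^-1 * (m1 h - m1 0)) @ 0^'+ --> m2 0 ->
  (forall x : R, 0 <= x < 1 -> 0 < m1 x) ->
  (forall x : R, 0 <= x < 1 -> 0 < m2 x) ->
  (fun x : R => m2 x / (m1 x) ^+ 2) @ 1^'- --> 0 ->
  0 < varkappa ->
  (fun x : R => m2 x * mfun_of mu x * x / (m1 x) ^+ 2) @ 1^'- --> varkappa ->
  (fun x : R => mfun_of mu x / m1 x) @ 1^'- --> 0 ->
  (* g = m^{-1} : [0,oo) -> [0,1) *)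
  (forall y : R, 0 <= y -> 0 <= g y < 1 /\ mfun_of mu (g y) = y) ->
  (* for large t, x_t is the unique solution in [0,t) of
     (log g)'(lambda x) = 1 / (lambda (t - x)) *)
  (\forall t \near +oo,
     (0 <= xt t < t /\
      derive1 (fun u : R => ln (g u)) (lambda * xt t) = (lambda * (t - xt t))^-1) /\
     (forall y : R, 0 <= y < t ->
        derive1 (fun u : R => ln (g u)) (lambda * y) = (lambda * (t - y))^-1 -> y = xt t)) ->
  (* (F_n) i.i.d. with law mu *)
  iid_with_law P F mu ->
  forall eps v : R, 0 < eps -> 0 < v ->
  exists kappa : R, 0 < kappa /\
    \forall t \near +oo,
      ((1 - eps)%:E <=
       P [set w : T | forall n : nat,
            (n_of lambda xt t (- v) <= n%:R <= n_of lambda xt t v ->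
            (F n w - g (ln (n%:R * Num.sqrt (sigma_of xt t)))) /
              derive1 g (ln (n%:R * Num.sqrt (sigma_of xt t))) <= kappa)%R])%E.
Proof.
move=> lambda0 mu01 mu_gt0 m_derive m1_derive _ _ m1_gt0 m2_gt0 _ _ _ _ gK _.
move=> [F_meas [F_law _]] eps v eps0 v0; pose C := 2 + 4 * lambda * v.
have C0 : 0 < C by rewrite /C; have := mulr_gt0 lambda0 v0; lra.
have [kappa [kappa0 d0_kappa kappa_eps]] := exists_expRN_mul_le `|derive1 g 0|^-1 C0 eps0.
exists kappa; split => //; apply: nearW => t.
have s1 := sqrt_sigma_of_ge1 xt t; set s := Num.sqrt _ in s1 *.
have [N12 N2_1 lnN] := n_of_window xt t lambda0 v0; rewrite -/s in lnN.
apply: union_bound_window => [|n|]; first lra.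
  have := F_meas n measurableT _ (measurable_exceedance g (ln (n%:R * s)) kappa).
  by rewrite setTI.
have sum_mu := sum_mu_exceedance_le mu01 mu_gt0 m_derive m1_derive m1_gt0 m2_gt0 gK
  s1 N12 N2_1 kappa0 d0_kappa.
apply: le_trans (le_trans _ sum_mu) _.
  apply: lee_sum => n _; rewrite -(F_law n); [exact: lexx|exact: measurable_exceedance].
rewrite lee_fin lnN (le_trans _ kappa_eps) // -mulrA ler_wpM2l ?expR_ge0 //.
have -> : s^-1 * (2 * (2 * lambda * v * s + 1)) = 4 * lambda * v + 2 / s.
  by field; rewrite gt_eqF //; lra.
have : 2 / s <= 2 by rewrite ler_pdivrMr; lra.
by rewrite /C; lra.
Qed.
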